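(* Let $\mathfrak{R}$ be a read set with maximal read length $L$. Then every string of length $2L$ and every non-contained read of $\mathfrak{R}$ is a conductor for $\mathrm{CC}(\mathfrak{R})$.
   Context: All strings are over a fixed finite alphabet $\Sigma$ (in the paper's convention this is the alphabet of $k$-mers, so overlaps of length at least $1$ correspond to overlaps of at least $k$ nucleotides). A cyclic string is a bi-infinite periodic word $\mathbb{Z}\to\Sigma$ up to shift; for a nonempty finite $x$, $\langle x\rangle$ is the cyclic string repeating $x$ in both directions. A read set $\mathfrak{R}$ is a finite set of nonempty finite strings (reads); a read is non-contained if it is not a substring of any other read of $\mathfrak{R}$. A read chain is a sequence of reads $r_1,\dots,r_n$ (repetitions allowed) together with integers $t_1,\dots,t_{n-1}$ with $1\le t_i\le\min(|r_i|,|r_{i+1}|)$ such that the length-$t_i$ suffix of $r_i$ equals the length-$t_i$ prefix of $r_{i+1}$; its merged string is $r_1$ followed, for $i=1,\dots,n-1$, by $r_{i+1}$ with its first $t_i$ characters removed. A chain is cyclic if $n\ge 2$ and $r_1=r_n$; then its merged string has the form $r_1x$, and if $x$ is nonempty the label of the cyclic chain is $\langle x\rangle$. $\mathrm{CC}(\mathfrak{R})$ is the set of labels of cyclic read chains. A finite string $v$ is a conductor for a set $\mathfrak{C}$ of cyclic strings if for all nonempty finite strings $a,b$ such that $va$ and $vb$ both end with $v$, we have $\langle ab\rangle\in\mathfrak{C}$ if and only if $\langle a\rangle\in\mathfrak{C}$ and $\langle b\rangle\in\mathfrak{C}$. *)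

From mathcomp Require Import all_boot all_order all_algebra.
Set Implicit Arguments. Unset Strict Implicit. Unset Printing Implicit Defensive.
Import GRing.Theory Num.Theory.

Section Defs.
Variable S : finType.

(* A cyclic string (bi-infinite word Z -> Sigma) is represented as a map
   int -> option S; cyclic strings coming from nonempty words never take
   the value None.  "Up to shift" is handled by [cyc_eq]. *)
Definition cstring := int -> option S.

Definition cyc (x : seq S) : cstring :=
  fun i => nth None (map Some x) `|(i %% (size x)%:Z)%Z|%N.

Definition cyc_eq (f g : cstring) : Prop :=
  exists k : int, forall i : int, f (i + k)%R = g i.

Definition read_chain (R : seq (seq S)) (rs : seq (seq S)) (ts : seq nat) : Prop :=
  0 < size rs /\ size ts = (size rs).-1 /\
  (forall r, r \in rs -> r \in R) /\
  (forall i, i < (size rs).-1 ->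
     let ri := nth [::] rs i in
     let rj := nth [::] rs i.+1 in
     let t := nth 0 ts i in
     1 <= t <= minn (size ri) (size rj) /\
     drop (size ri - t) ri = take t rj).

Definition merged (rs : seq (seq S)) (ts : seq nat) : seq S :=
  nth [::] rs 0 ++
  flatten [seq drop (nth 0 ts i) (nth [::] rs i.+1) | i <- iota 0 (size rs).-1].

Definition cyclic_chain (R : seq (seq S)) rs ts : Prop :=
  read_chain R rs ts /\ 2 <= size rs /\ nth [::] rs 0 = last [::] rs.

Definition CC (R : seq (seq S)) (w : cstring) : Prop :=
  exists rs ts, cyclic_chain R rs ts /\
    let x := drop (size (nth [::] rs 0)) (merged rs ts) in
    x != [::] /\ cyc_eq (cyc x) w.

Definition conductor (C : cstring -> Prop) (v : seq S) : Prop :=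
  forall a b : seq S, a != [::] -> b != [::] ->
    suffix v (v ++ a) -> suffix v (v ++ b) ->
    (C (cyc (a ++ b)) <-> C (cyc a) /\ C (cyc b)).

Definition read_set (R : seq (seq S)) : Prop := [::] \notin R.

Definition max_read_length (R : seq (seq S)) : nat := \max_(r <- R) size r.

Definition non_contained (R : seq (seq S)) (r : seq S) : Prop :=
  r \in R /\ forall r', r' \in R -> r' != r -> ~~ infix r r'.

End Defs.

(* A cyclic string <w> is the label of a cyclic read chain exactly when every
   junction of the bi-infinite word (pair of adjacent positions) lies inside an
   occurrence of a read.  A cyclic chain spells a window of <w> all of whose
   junctions are spanned by its reads.  Conversely, walk through <w> taking at
   each step, among the read occurrences spanning the junction where the previous
   one ends, one reaching furthest to the right: consecutive occurrences then
   overlap as in a read chain, and since the occurrences of reads in the periodic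
   word <w> fall into finitely many classes modulo |w|, the walk repeats a class
   and closes into a cyclic chain.
   If va and vb end with v, the word va occurs in <a> and in <ab>, and vb in <b>
   and in <ab>, each time beginning and ending with a copy of v.  Whether a
   junction next to such a window is spanned is decided inside the window: for
   |v| = 2L because no read is longer than L, and for a non-contained read v
   because an occurrence leaving the window would contain one of the two copies
   of v.  Hence <ab> is covered iff <a> and <b> are. *)

From mathcomp Require Import all_boot all_order all_algebra zify.
Import Order.TTheory GRing.Theory Num.Theory.
Set Implicit Arguments. Unset Strict Implicit. Unset Printing Implicit Defensive.
Local Open Scope ring_scope.

Lemma pigeonhole (T : eqType) (h : nat -> T) (s : seq T) :
  (forall k, h k \in s) -> exists i j, (i < j)%N /\ h i = h j.
Proof.
move=> hs; have sub : {subset [seq h k | k <- iota 0 (size s).+1] <= s}.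
  by move=> _ /mapP[k _ ->].
have /(uniqPn (h 0%N))[i [j [ij]]] : ~~ uniq [seq h k | k <- iota 0 (size s).+1].
  by apply/negP => /uniq_leq_size/(_ sub); rewrite size_map size_iota ltnn.
rewrite size_map size_iota => js.
rewrite !(nth_map 0%N) ?size_iota ?nth_iota //; try exact: ltn_trans js.
by exists i, j.
Qed.

Section ReadCoverage.
Variable S : finType.
Implicit Types (f g : cstring S) (a b r u v w x : seq S).

Lemma cyc_nat x (n : nat) : (n < size x)%N -> cyc x n%:Z = onth x n.
Proof. by move=> lt_n; rewrite /cyc modz_nat modn_small // onthE. Qed.

Lemma cyc_periodic x i (z : int) : cyc x (i + z * (size x)%:Z) = cyc x i.
Proof. by rewrite /cyc addrC modzMDl. Qed.

Definition cshift f (k : int) : cstring S := fun i => f (i + k).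

Fixpoint occurs_at f r (p : int) : bool :=
  if r is c :: r' then (f p == Some c) && occurs_at f r' (p + 1) else true.

Lemma occurs_atP f r p :
  reflect (forall i : nat, (i < size r)%N -> f (p + i%:Z) = onth r i) (occurs_at f r p).
Proof.
elim: r p => [|c r IH] p /=; first by constructor.
apply: (iffP andP) => [[/eqP fp /IH occ] [|i] lt_i /=|occ].
- by rewrite addr0.
- by rewrite -occ //; congr f; lia.
split; first by rewrite -[p]addr0 (occ 0%N).
by apply/IH => i lt_i; rewrite -[RHS]/(onth (c :: r) i.+1) -occ //; congr f; lia.
Qed.

Lemma occurs_at_cat f r1 r2 p :
  occurs_at f (r1 ++ r2) p = occurs_at f r1 p && occurs_at f r2 (p + (size r1)%:Z).
Proof.
elim: r1 p => [|c r1 IH] p /=; first by rewrite addr0.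
by rewrite IH andbA -addrA -(PoszD 1).
Qed.

Lemma occurs_at_take f r p n : occurs_at f r p -> occurs_at f (take n r) p.
Proof. by rewrite -{1}(cat_take_drop n r) occurs_at_cat => /andP[]. Qed.

Lemma occurs_at_drop f r p n : (n <= size r)%N ->
  occurs_at f r p -> occurs_at f (drop n r) (p + n%:Z).
Proof.
by move=> le_n; rewrite -{1}(cat_take_drop n r) occurs_at_cat size_takel // => /andP[].
Qed.

Lemma occurs_at_shift f r p k : occurs_at (cshift f k) r p = occurs_at f r (p + k).
Proof. by elim: r p => //= c r IH p; rewrite IH addrAC. Qed.

Lemma eq_in_occurs_at f g r p :
  (forall i, p <= i < p + (size r)%:Z -> f i = g i) -> occurs_at f r p = occurs_at g r p.
Proof.
elim: r p => //= c r IH p eq_fg; rewrite eq_fg ?IH //; last by lia.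
by move=> i lt_i; apply: eq_fg; lia.
Qed.

Lemma occurs_at_agree f g r p : occurs_at f r p -> occurs_at g r p ->
  forall i, p <= i < p + (size r)%:Z -> f i = g i.
Proof.
move=> /occurs_atP occ_f /occurs_atP occ_g i lt_i.
have -> : i = p + `|i - p|%N%:Z by lia.
by rewrite occ_f ?occ_g //; lia.
Qed.

Lemma occurs_at_inj f r r' p :
  occurs_at f r p -> occurs_at f r' p -> size r = size r' -> r = r'.
Proof.
move=> /occurs_atP occ /occurs_atP occ' eq_size; apply: eq_from_onth_le => i.
by rewrite -eq_size maxnn => lt_i; rewrite -occ // occ' -?eq_size.
Qed.

Lemma occurs_at_infix f r r' p p' : occurs_at f r' p -> occurs_at f r p' ->
  p <= p' -> p' + (size r)%:Z <= p + (size r')%:Z -> infix r r'.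
Proof.
move=> occ' occ le_p le_end; set k := `|p' - p|%N.
rewrite -(cat_take_drop k r') -(cat_take_drop (size r) (drop k r')) in occ' *.
set t := take (size r) (drop k r').
suff -> : r = t by apply: infix_infix.
have size_t : size t = size r by rewrite size_takel // size_drop; lia.
move: occ'; rewrite !occurs_at_cat size_takel => [/and3P[_ occ_t _]|]; last by lia.
by apply: occurs_at_inj occ _ _ => //; move: occ_t; congr occurs_at; lia.
Qed.

Lemma occurs_cyc_periodic x r p (z : int) :
  occurs_at (cyc x) r (p + z * (size x)%:Z) = occurs_at (cyc x) r p.
Proof. by rewrite -occurs_at_shift; apply: eq_in_occurs_at => i _; apply: cyc_periodic. Qed.

Lemma suffix_self_rot v a :
  suffix v (v ++ a) -> exists2 a', v ++ a = a' ++ v & size a' = size a.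
Proof.
case/suffixP=> a' eq_va; exists a' => //.
by move: (congr1 size eq_va); rewrite !size_cat addnC => /addIn->.
Qed.

Lemma suffix_self_cat v a b :
  suffix v (v ++ a) -> suffix v (v ++ b) -> suffix v (v ++ a ++ b).
Proof.
move=> /suffixP[a' eq_va] /suffixP[b' eq_vb]; apply/suffixP; exists (a' ++ b').
by rewrite catA eq_va -[in LHS]catA eq_vb catA.
Qed.

Lemma occurs_cyc_suffix v a : a != [::] -> suffix v (v ++ a) ->
  occurs_at (cyc a) (v ++ a) (- (size v)%:Z).
Proof.
move=> a_nil suf; have [a' eq_va size_a'] := suffix_self_rot suf; set u := v ++ a.
have a_pos : (0 < size a)%N by rewrite lt0n size_eq0.
have periodic_u i : (i < size v)%N -> onth u (i + size a) = onth u i.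
  move=> lt_i; rewrite [in LHS]/u eq_va onth_cat size_a' ltnNge leq_addl addnK.
  by rewrite /u onth_cat lt_i.
have in_a i : (size v <= i < size u)%N -> cyc a (- (size v)%:Z + i%:Z) = onth u i.
  move=> /andP[le_i]; rewrite size_cat => lt_i.
  by rewrite onth_cat ltnNge le_i /= -cyc_nat; [congr (cyc a _) |]; lia.
(* [u] has period [size a], so a position left of the copy of [a] can be moved
   [size a] to the right: descending induction on the distance to that copy. *)
apply/occurs_atP; suff: forall n i, (size v <= i + n < size u + n)%N ->
  cyc a (- (size v)%:Z + i%:Z) = onth u i by move=> + i lt_i => /(_ (size v) i); apply; lia.
elim=> [|n IH] i; first by rewrite !addn0; apply: in_a.
case: (leqP (size v) i) => [le_i lt_i|lt_i bounds]; first by apply: in_a; lia.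
rewrite -periodic_u // -IH; last by move: bounds; rewrite /u size_cat; lia.
by rewrite -(cyc_periodic _ _ 1) mul1r; congr (cyc a _); lia.
Qed.

Lemma cyc_window w x c (z : int) : x != [::] -> (size x)%:Z = z * (size w)%:Z ->
  occurs_at (cyc w) x c -> forall i, cyc x i = cyc w (i + c).
Proof.
move=> x_nil size_x /occurs_atP occ i; set d := (size x)%:Z.
have d_pos : 0 < d by rewrite ltz_nat lt0n size_eq0.
have m_ge0 := modz_ge0 i (lt0r_neq0 d_pos); have m_lt := ltz_pmod i d_pos.
rewrite {1}(divz_eq i d) addrC cyc_periodic.
have -> : (i %% d)%Z = `|(i %% d)%Z|%N%:Z by lia.
rewrite cyc_nat -?occ; try lia.
rewrite -(cyc_periodic w _ ((i %/ d)%Z * z)) -mulrA -size_x.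
by congr (cyc w _); have := divz_eq i d; lia.
Qed.

Variable R : seq (seq S).

Definition occ_end (o : seq S * int) : int := o.2 + (size o.1)%:Z.

Definition spans f q (o : seq S * int) : bool :=
  [&& o.1 \in R, occurs_at f o.1 o.2 & o.2 < q < occ_end o].

Definition spanned f q : Prop := exists o, spans f q o.

Definition covered f : Prop := forall q, spanned f q.

Lemma spans_shift f k q o : spans (cshift f k) q o = spans f (q + k) (o.1, o.2 + k).
Proof.
rewrite /spans /occ_end occurs_at_shift /=; do 2 congr andb.
by apply/idP/idP; lia.
Qed.

Lemma spanned_shift f k q : spanned (cshift f k) q <-> spanned f (q + k).
Proof.
split=> [[o span_o] | [[r p] span_o]]; first by exists (o.1, o.2 + k); rewrite -spans_shift.
by exists (r, p - k); rewrite spans_shift /= subrK.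
Qed.

Lemma covered_shift f k : covered f -> covered (cshift f k).
Proof. by move=> cov_f q; apply/spanned_shift. Qed.

Lemma eq_covered f g : f =1 g -> covered f -> covered g.
Proof.
move=> eq_fg cov_f q; have [o o_spans] := cov_f q; exists o.
by move: o_spans; rewrite /spans (@eq_in_occurs_at f g).
Qed.

Lemma covered_cyc_window x (lo : int) : x != [::] ->
  (forall q, lo <= q < lo + (size x)%:Z -> spanned (cyc x) q) -> covered (cyc x).
Proof.
move=> x_nil window q.
have d_pos : 0 < (size x)%:Z by rewrite ltz_nat lt0n size_eq0.
have [|[r p] span_o] := window (lo + ((q - lo) %% (size x)%:Z)%Z).
  have := modz_ge0 (q - lo) (lt0r_neq0 d_pos); have := ltz_pmod (q - lo) d_pos; lia.
exists (r, p + ((q - lo) %/ (size x)%:Z)%Z * (size x)%:Z).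
move: span_o; rewrite /spans /occ_end occurs_cyc_periodic /= => /and3P[-> -> /=].
by have := divz_eq (q - lo) (size x)%:Z; lia.
Qed.

Definition merged_prefix (rs : seq (seq S)) (ts : seq nat) (k : nat) : seq S :=
  nth [::] rs 0 ++
  flatten [seq drop (nth 0%N ts i) (nth [::] rs i.+1) | i <- iota 0 k].

Lemma merged_prefix0 rs ts : merged_prefix rs ts 0 = nth [::] rs 0.
Proof. exact: cats0. Qed.

Lemma merged_prefixS rs ts k : merged_prefix rs ts k.+1 =
  merged_prefix rs ts k ++ drop (nth 0%N ts k) (nth [::] rs k.+1).
Proof. by rewrite /merged_prefix -[in LHS]addn1 iotaD map_cat flatten_cat /= add0n cats0 catA. Qed.

Lemma merged_prefix_spanned rs ts : read_chain R rs ts ->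
  forall k, (k <= (size rs).-1)%N ->
  suffix (nth [::] rs k) (merged_prefix rs ts k) /\
  forall f c q, occurs_at f (merged_prefix rs ts k) c ->
    0 < q < (size (merged_prefix rs ts k))%:Z -> spanned f (c + q).
Proof.
move=> [rs_pos [_ [in_R overlap]]]; elim=> [|k IH] le_k.
  rewrite merged_prefix0; split=> [|f c q occ lt_q]; first exact: suffix_refl.
  by exists (nth [::] rs 0, c); rewrite /spans /occ_end occ in_R ?mem_nth //=; lia.
have [/suffixP[Y eq_Y] span_k] := IH (ltnW le_k).
case: (overlap k le_k) => /andP[t_pos t_le] eq_t.
set rk := nth [::] rs k in eq_Y t_le eq_t; set rk1 := nth [::] rs k.+1 in t_le eq_t *.
set t := nth 0%N ts k in t_pos t_le eq_t *; set Y' := Y ++ take (size rk - t) rk.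
have eq_next : merged_prefix rs ts k.+1 = Y' ++ rk1.
  rewrite merged_prefixS eq_Y -[in RHS](cat_take_drop t rk1) -eq_t.
  by rewrite -[in LHS](cat_take_drop (size rk - t) rk) -!catA.
have t_rk : (t <= size rk)%N by move: t_le; rewrite leq_min => /andP[].
have size_Y' : size Y' = (size Y + size rk - t)%N.
  by rewrite size_cat size_takel ?leq_subr // addnBA.
have size_k : size (merged_prefix rs ts k) = (size Y + size rk)%N by rewrite eq_Y size_cat.
split=> [|f c q occ lt_q]; first by apply/suffixP; exists Y'.
have : occurs_at f (merged_prefix rs ts k ++ drop t rk1) c by rewrite -merged_prefixS.
rewrite occurs_at_cat => /andP[occ_k _].
move: occ lt_q; rewrite eq_next occurs_at_cat => /andP[_ occ_rk1] lt_q.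
case: (ltP q (size (merged_prefix rs ts k))%:Z) => [q_lt | q_ge].
  by apply: span_k occ_k _; lia.
exists (rk1, c + (size Y')%:Z); rewrite /spans /occ_end occ_rk1 in_R ?mem_nth //=; last by lia.
by move: lt_q q_ge; rewrite size_cat size_Y' size_k; lia.
Qed.

Lemma cyclic_chain_covered rs ts : read_set R -> cyclic_chain R rs ts ->
  let x := drop (size (nth [::] rs 0)) (merged rs ts) in
  x != [::] -> covered (cyc x).
Proof.
move=> Rset [chain [_ first_last]] x x_nil; set r0 := nth [::] rs 0.
have eq_merged : merged_prefix rs ts (size rs).-1 = r0 ++ x.
  by rewrite /x /merged drop_size_cat.
have [suf span] := merged_prefix_spanned chain (leqnn _).
rewrite eq_merged nth_last -first_last in suf span.
have r0_pos : (0 < size r0)%N.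
  case: chain => rs_pos [_ [in_R _]]; have := in_R r0 (mem_nth _ rs_pos).
  by rewrite lt0n size_eq0; apply: contraTneq => ->.
apply: (covered_cyc_window (lo := 0)) => // q lt_q.
have := span (cyc x) _ (q + (size r0)%:Z) (occurs_cyc_suffix x_nil suf).
by rewrite addrCA addNr addr0; apply; rewrite size_cat; lia.
Qed.

Lemma CC_covered w : read_set R -> CC R (cyc w) -> covered (cyc w).
Proof.
move=> Rset [rs [ts [chain [x_nil [k eq_w]]]]].
exact: eq_covered eq_w (covered_shift k (cyclic_chain_covered Rset chain x_nil)).
Qed.

Definition occ_overlap (o o' : seq S * int) : nat := `|occ_end o - o'.2|%N.

Definition is_walk f (O : nat -> seq S * int) (N : nat) : Prop :=
  (forall k, (k <= N)%N -> ((O k).1 \in R) && occurs_at f (O k).1 (O k).2) /\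
  (forall k, (k < N)%N -> [/\ (O k).2 <= (O k.+1).2, (O k.+1).2 < occ_end (O k)
                              & occ_end (O k) <= occ_end (O k.+1)]).

Section Walk.
Variables (f : cstring S) (O : nat -> seq S * int) (N : nat).
Hypothesis walk_O : is_walk f O N.
Let walk_occ := walk_O.1.
Let walk_step := walk_O.2.

Definition walk_reads := mkseq (fun k => (O k).1) N.+1.
Definition walk_overlaps := mkseq (fun k => occ_overlap (O k) (O k.+1)) N.

Lemma walk_read_chain : read_chain R walk_reads walk_overlaps.
Proof.
rewrite /read_chain /walk_reads /walk_overlaps !size_mkseq; split=> //; split=> //.
split=> [r /mapP[k] | k lt_k].
  by rewrite mem_iota add0n => /andP[_ lt_k] ->; case/andP: (walk_occ lt_k).
rewrite !nth_mkseq //=; last by lia.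
have [le_p lt_p le_e] := walk_step lt_k; rewrite /occ_overlap /occ_end in lt_p le_e *.
split; first by rewrite leq_min; lia.
case/andP: (walk_occ (ltnW lt_k)) => _ occ_k; case/andP: (walk_occ lt_k) => _ occ_k1.
set t := `|_|%N; have t_le : (t <= size (O k.+1).1)%N by lia.
apply: (@occurs_at_inj f _ _ (O k.+1).2); last by rewrite size_drop size_takel //; lia.
  by have := occurs_at_drop (leq_subr t _) occ_k; congr occurs_at; lia.
exact: occurs_at_take.
Qed.

Lemma walk_merged_prefix k : (k <= N)%N ->
  occurs_at f (merged_prefix walk_reads walk_overlaps k) (O 0%N).2 /\
  (size (merged_prefix walk_reads walk_overlaps k))%:Z = occ_end (O k) - (O 0%N).2.
Proof.
elim: k => [|k IH] le_k.
  rewrite merged_prefix0 nth_mkseq //; case/andP: (walk_occ le_k) => _ ->.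
  by split=> //; rewrite /occ_end; lia.
have [occ_pre size_pre] := IH (ltnW le_k).
rewrite merged_prefixS /walk_reads /walk_overlaps !nth_mkseq // -/walk_reads -/walk_overlaps.
have [le_p lt_p le_e] := walk_step le_k.
case/andP: (walk_occ le_k) => _ occ_k1; rewrite /occ_end in lt_p le_e size_pre *.
have t_le : (occ_overlap (O k) (O k.+1) <= size (O k.+1).1)%N by rewrite /occ_overlap /occ_end; lia.
rewrite occurs_at_cat size_cat size_drop occ_pre /=; split; last by rewrite /occ_overlap; lia.
by move: (occurs_at_drop t_le occ_k1); congr occurs_at; rewrite /occ_overlap; lia.
Qed.
End Walk.

Lemma walk_CC w O N (z : int) : is_walk (cyc w) O N -> (0 < N)%N ->
  (O N).1 = (O 0%N).1 -> occ_end (O 0%N) < occ_end (O N) ->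
  occ_end (O N) - occ_end (O 0%N) = z * (size w)%:Z -> CC R (cyc w).
Proof.
move=> walk_O N_pos closed lt_end period.
set rs := walk_reads O N; set ts := walk_overlaps O N.
have r0 : nth [::] rs 0 = (O 0%N).1 by rewrite nth_mkseq.
exists rs, ts; split.
  split; first exact: walk_read_chain walk_O.
  by rewrite /rs size_mkseq -nth_last size_mkseq /= /walk_reads nth_mkseq // closed.
rewrite r0; set x := drop _ _.
have eq_merged : merged_prefix rs ts N = (O 0%N).1 ++ x.
  by rewrite /x /merged /rs size_mkseq -/rs r0 drop_size_cat.
have [] := walk_merged_prefix walk_O (leqnn N).
rewrite -/rs -/ts eq_merged occurs_at_cat size_cat => /andP[_ occ_x] size_x.
have {}size_x : (size x)%:Z = z * (size w)%:Z.
  by rewrite -period; move: size_x; rewrite /occ_end; lia.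
have x_nil : x != [::] by rewrite -size_eq0 -lt0n -ltz_nat size_x -period subr_gt0.
split=> //; exists (- occ_end (O 0%N)) => i.
by rewrite (cyc_window x_nil size_x occ_x) subrK.
Qed.

Section Greedy.
Variable f : cstring S.

Definition span_candidates (q : int) : seq (seq S * int) :=
  [seq (r, q - (j.+1)%:Z) | r <- R, j <- iota 0 (size r)].

Definition furthest_span (q : int) : seq S * int :=
  head ([::], 0) (sort (fun o o' => occ_end o' <= occ_end o)
                       [seq o <- span_candidates q | spans f q o]).

Lemma mem_span_candidates q o : spans f q o -> o \in span_candidates q.
Proof.
case: o => r p /and3P[r_R _ /andP[lt_p lt_q]]; rewrite /occ_end /= in lt_p lt_q.
have -> : p = q - (`|(q - p - 1)%R|%N.+1)%:Z by lia.
by apply: (allpairs_f_dep (fun r j => (r, q - (j.+1)%:Z))); rewrite // mem_iota; lia.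
Qed.

Lemma furthest_spanP q : spanned f q ->
  spans f q (furthest_span q) /\
  forall o, spans f q o -> occ_end o <= occ_end (furthest_span q).
Proof.
case=> o0 span_o0; set le_end := fun o o' : seq S * int => occ_end o' <= occ_end o.
set spanners := [seq o <- span_candidates q | spans f q o].
have total_le : total le_end by move=> o o'; apply: le_total.
have trans_le : transitive le_end by move=> o' o o'' /= h1 h2; apply: le_trans h2 h1.
have mem_sorted o : (o \in sort le_end spanners) = spans f q o.
  by rewrite mem_sort mem_filter andb_idr //; apply: mem_span_candidates.
rewrite /furthest_span -/le_end -/spanners; move: mem_sorted (sort_sorted total_le spanners).
case: sort => [|o1 s] mem_sorted; first by move: (mem_sorted o0); rewrite span_o0.
move=> /(order_path_min trans_le)/allP max_o1; split; first by rewrite -mem_sorted mem_head.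
by move=> o; rewrite -mem_sorted in_cons => /orP[/eqP-> // | /max_o1].
Qed.

Hypothesis f_covered : covered f.
Variable q0 : int.

Definition greedy_pos (k : nat) : int := iter k (fun q => occ_end (furthest_span q)) q0.

Definition greedy_walk (k : nat) : seq S * int := furthest_span (greedy_pos k).

Lemma greedy_walk_spans k : spans f (greedy_pos k) (greedy_walk k).
Proof. exact: (furthest_spanP (f_covered _)).1. Qed.

Lemma greedy_walk_step k :
  [/\ (greedy_walk k).2 <= (greedy_walk k.+1).2,
      (greedy_walk k.+1).2 < occ_end (greedy_walk k)
    & occ_end (greedy_walk k) < occ_end (greedy_walk k.+1)].
Proof.
have [span_A max_A] := furthest_spanP (f_covered (greedy_pos k)).
rewrite -/(greedy_walk k) in span_A max_A; case/and3P: span_A => _ _ /andP[lt_A lt_A'].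
have /and3P[B_R occ_B lt_B] := greedy_walk_spans k.+1.
have pos_S : greedy_pos k.+1 = occ_end (greedy_walk k) by [].
move: lt_B; rewrite pos_S => /andP[lt_B lt_B']; split=> //; rewrite leNgt; apply/negP => lt_BA.
(* Starting before greedy_walk k, greedy_walk k.+1 would span greedy_pos k and
   reach further, against the choice of greedy_walk k. *)
suff: occ_end (greedy_walk k.+1) <= occ_end (greedy_walk k) by lia.
by apply: max_A; rewrite /spans B_R occ_B /=; lia.
Qed.

Lemma greedy_walk_is_walk i N : is_walk f (fun k => greedy_walk (i + k)%N) N.
Proof.
split=> k _; first by case/and3P: (greedy_walk_spans (i + k)%N) => -> ->.
by rewrite addnS; have [? ? ?] := greedy_walk_step (i + k)%N; split=> //; apply: ltW.
Qed.

Lemma greedy_walk_end_increasing i j : (i < j)%N ->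
  occ_end (greedy_walk i) < occ_end (greedy_walk j).
Proof.
elim: j => // j IH; rewrite ltnS leq_eqVlt => /orP[/eqP-> | /IH lt_ij].
  by case: (greedy_walk_step j).
by apply: lt_trans lt_ij _; case: (greedy_walk_step j).
Qed.
End Greedy.

Lemma covered_CC w : w != [::] -> covered (cyc w) -> CC R (cyc w).
Proof.
move=> w_nil cov_w; set d := (size w)%:Z; set O := greedy_walk (cyc w) 0.
have d_pos : 0 < d by rewrite ltz_nat lt0n size_eq0.
have mod_ge0 p : 0 <= (p %% d)%Z := modz_ge0 p (lt0r_neq0 d_pos).
pose phase k := ((O k).1, `|((O k).2 %% d)%Z|%N).
have [k|i [j [lt_ij [same_read same_phase]]]] :=
  pigeonhole (h := phase) (s := [seq (r, n) | r <- R, n <- iota 0 (size w)]).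
  apply: allpairs_f; first by case/and3P: (greedy_walk_spans cov_w 0 k).
  by rewrite mem_iota add0n -ltz_nat gez0_abs ?ltz_pmod.
have same_mod : ((O i).2 %% d)%Z = ((O j).2 %% d)%Z.
  by rewrite -(gez0_abs (mod_ge0 (O i).2)) same_phase gez0_abs.
apply: (@walk_CC w (fun k => O (i + k)%N) (j - i) (((O j).2 %/ d)%Z - ((O i).2 %/ d)%Z)).
- exact: greedy_walk_is_walk.
- by rewrite subn_gt0.
- by rewrite /= subnKC ?addn0 // ltnW.
- by rewrite /= subnKC ?addn0 ?greedy_walk_end_increasing // ltnW.
rewrite /= subnKC ?(ltnW lt_ij) // addn0 /occ_end same_read mulrBl.
rewrite {1}(divz_eq (O j).2 d) {1}(divz_eq (O i).2 d) same_mod.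
by rewrite -/d; lia.
Qed.

Lemma CC_cyc_covered w : read_set R -> w != [::] -> CC R (cyc w) <-> covered (cyc w).
Proof. by move=> Rset w_nil; split; [apply: CC_covered | apply: covered_CC]. Qed.

Definition spanning_local v (lo : int) : Prop :=
  forall f g u, suffix v (v ++ u) ->
  occurs_at f (v ++ u) (- (size v)%:Z) -> occurs_at g (v ++ u) (- (size v)%:Z) ->
  forall q, lo <= q < lo + (size u)%:Z -> spanned f q -> spanned g q.

Lemma spanning_local_long (L : nat) v : (forall r, r \in R -> (size r <= L)%N) ->
  size v = (2 * L)%N -> spanning_local v (- L%:Z).
Proof.
move=> bound size_v f g u _ occ_f occ_g q lt_q [[r p] /and3P[r_R occ_r lt_p]].
exists (r, p); rewrite /spans r_R /=; apply/andP; split=> //.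
rewrite -(eq_in_occurs_at (f := f)) // => i lt_i; apply: (occurs_at_agree occ_f occ_g).
by move: (bound r r_R) lt_p; rewrite /occ_end size_cat size_v /=; lia.
Qed.

Lemma occurs_window_borders f v u : suffix v (v ++ u) ->
  occurs_at f (v ++ u) (- (size v)%:Z) ->
  occurs_at f v (- (size v)%:Z) /\ occurs_at f v ((size u)%:Z - (size v)%:Z).
Proof.
move=> suf occ; have [u' eq_vu size_u'] := suffix_self_rot suf.
split; first by move: occ; rewrite occurs_at_cat => /andP[].
by move: occ; rewrite eq_vu occurs_at_cat size_u' => /andP[_]; congr occurs_at; lia.
Qed.

Lemma spanning_local_noncontained r : r != [::] -> non_contained R r ->
  spanning_local r (1 - (size r)%:Z).
Proof.
move=> r_nil [r_R r_max] f g u suf occ_f occ_g q lt_q [[r' p] /and3P[r'_R occ_r' lt_p]].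
have r_pos : (0 < size r)%N by rewrite lt0n size_eq0.
have agree := occurs_at_agree occ_f occ_g.
have [r_left r_right] := occurs_window_borders suf occ_f.
have [g_left g_right] := occurs_window_borders suf occ_g.
have not_inside p0 : occurs_at f r p0 -> p <= p0 ->
    p0 + (size r)%:Z <= p + (size r')%:Z -> (size r < size r')%N -> False.
  move=> occ_r le_p le_end lt_size.
  have r'_neq : r' != r by apply: contraTneq lt_size => ->; rewrite ltnn.
  by have := r_max r' r'_R r'_neq; rewrite (occurs_at_infix occ_r' occ_r le_p le_end).
clear r_nil r_max suf occ_f occ_g; rewrite /occ_end /= in lt_p.
case: (ltP q 0) => [q_neg | q_ge0].
  by exists (r, - (size r)%:Z); rewrite /spans /occ_end r_R g_left /=; lia.
case: (ltP ((size u)%:Z - (size r)%:Z) q) => [q_big | q_le].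
  by exists (r, (size u)%:Z - (size r)%:Z); rewrite /spans /occ_end r_R g_right /=; lia.
have left_in : - (size r)%:Z <= p.
  by rewrite leNgt; apply/negP => lt_pr; apply: (not_inside _ r_left); lia.
have right_in : p + (size r')%:Z <= (size u)%:Z.
  by rewrite leNgt; apply/negP => lt_ur; apply: (not_inside _ r_right); lia.
exists (r', p); rewrite /spans /occ_end r'_R /= -(eq_in_occurs_at (f := f)) ?occ_r'; first by lia.
by move=> i lt_i; apply: agree; rewrite size_cat; lia.
Qed.

Section Conductor.
Variables (v : seq S) (lo : int).
Hypotheses (Rset : read_set R) (v_local : spanning_local v lo).

Lemma covered_cyc_transfer f x : x != [::] -> suffix v (v ++ x) ->
  occurs_at f (v ++ x) (- (size v)%:Z) -> covered f -> covered (cyc x).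
Proof.
move=> x_nil suf occ cov; apply: (covered_cyc_window (lo := lo)) => // q lt_q.
exact: v_local suf occ (occurs_cyc_suffix x_nil suf) q lt_q (cov q).
Qed.

Lemma conductor_of_local : conductor (CC R) v.
Proof.
move=> a b a_nil b_nil suf_a suf_b.
have ab_nil : a ++ b != [::] by rewrite -size_eq0 size_cat addn_eq0 size_eq0 negb_and a_nil.
have occ_ab := occurs_cyc_suffix ab_nil (suffix_self_cat suf_a suf_b).
have occ_a : occurs_at (cyc (a ++ b)) (v ++ a) (- (size v)%:Z).
  by move: occ_ab; rewrite catA occurs_at_cat => /andP[].
have occ_b : occurs_at (cshift (cyc (a ++ b)) (size a)%:Z) (v ++ b) (- (size v)%:Z).
  have [a' eq_va size_a'] := suffix_self_rot suf_a.
  move: occ_ab; rewrite catA eq_va -catA occurs_at_cat occurs_at_shift size_a' => /andP[_].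
  by congr occurs_at; lia.
rewrite !CC_cyc_covered //; split=> [cov_ab | [cov_a cov_b]].
  split; first exact: covered_cyc_transfer occ_a cov_ab.
  exact: covered_cyc_transfer occ_b (covered_shift _ cov_ab).
apply: (covered_cyc_window (lo := lo)) => // q; rewrite size_cat => lt_q.
case: (ltP q (lo + (size a)%:Z)) => [q_lt | q_ge].
  by apply: (v_local suf_a (occurs_cyc_suffix a_nil suf_a) occ_a _ (cov_a q)); lia.
rewrite -(subrK (size a)%:Z q); apply/spanned_shift.
by apply: (v_local suf_b (occurs_cyc_suffix b_nil suf_b) occ_b _ (cov_b _)); lia.
Qed.
End Conductor.

End ReadCoverage.

Local Close Scope ring_scope.

Theorem theorem7 (S : finType) (R : seq (seq S)) :
  read_set R ->
  (forall v : seq S, size v = 2 * max_read_length R -> conductor (CC R) v) /\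
  (forall r : seq S, non_contained R r -> conductor (CC R) r).
Proof.
move=> Rset; split=> [v size_v | r r_max].
  apply: conductor_of_local Rset (spanning_local_long _ size_v) => r r_R.
  exact: leq_bigmax_seq.
have r_nil : r != [::] by case: r_max => r_R _; apply: contraTneq r_R => ->.
exact: conductor_of_local Rset (spanning_local_noncontained r_nil r_max).
Qed.
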